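(* Let $p$ be a prime, $H_p=\mathbb{Z}[1/p]$, and for $\lambda\in(0,\infty)$ let $f_+(\lambda)=\sum_{m=0}^\infty\max(0,1-p^m\lambda)$, $f_-(\lambda)=\sum_{m=1}^\infty\max(0,p^{-m}\lambda-1)$. (i) The functions $f_\pm$ are convex, continuous, piecewise affine with slopes in $H_p$, and $f_+(p\lambda)-f_+(\lambda)=-\max(0,1-\lambda)$, $f_-(p\lambda)-f_-(\lambda)=\max(0,\lambda-1)$. (ii) The function $\theta=f_++f_-$ on $(0,\infty)$ is convex, continuous, piecewise affine with slopes in $H_p$, and satisfies $\theta(p\lambda)=\theta(\lambda)+\lambda-1$ for all $\lambda\in(0,\infty)$. (iii) For all $\lambda\in(0,\infty)$, $\left|\theta(\lambda)-\left(\frac{1}{p-1}\lambda-\frac{\log\lambda}{\log p}\right)\right|\leq1$. *)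

From Stdlib Require Import Reals Lra Lia ZArith Znumtheory List.
From Coquelicot Require Import Coquelicot.
Open Scope R_scope.

Definition in_Hp (p : nat) (s : R) : Prop :=
  exists (k : Z) (n : nat), s = IZR k / (INR p ^ n).

Definition fplus (p : nat) (lam : R) : R :=
  Series (fun m : nat => Rmax 0 (1 - INR p ^ m * lam)).

(* f_-(lam) = sum_{m>=1} max(0, p^{-m} lam - 1)  (index shifted: m = k+1) *)
Definition fminus (p : nat) (lam : R) : R :=
  Series (fun k : nat => Rmax 0 (/ (INR p ^ (S k)) * lam - 1)).

Definition theta (p : nat) (lam : R) : R := fplus p lam + fminus p lam.

Definition convex_pos (f : R -> R) : Prop :=
  forall x y t, 0 < x -> 0 < y -> 0 <= t <= 1 ->
    f (t * x + (1 - t) * y) <= t * f x + (1 - t) * f y.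

Definition continuous_pos (f : R -> R) : Prop :=
  forall x, 0 < x -> continuity_pt f x.

Definition pw_affine_Hp (p : nat) (f : R -> R) : Prop :=
  forall a b, 0 < a -> a < b ->
    exists (xs : list R) (sl c : nat -> R),
      (2 <= length xs)%nat /\
      nth 0 xs 0 = a /\ last xs 0 = b /\
      (forall i, (S i < length xs)%nat ->
         nth i xs 0 < nth (S i) xs 0 /\
         in_Hp p (sl i) /\
         forall x, nth i xs 0 <= x <= nth (S i) xs 0 -> f x = sl i * x + c i).

From Stdlib Require Import Reals Lra Lia ZArith Znumtheory List.
From Coquelicot Require Import Coquelicot.
Open Scope R_scope.

(* On a compact interval [a, b] of (0, oo) only finitely many terms of f_+ and f_- are
   nonzero, so f_+, f_- and theta agree there with finite sums of hinges
   max(0, alpha + beta x) whose slopes beta are +-p^k; such sums are convex, continuous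
   and piecewise affine with slopes in Z[1/p].  The functional equations are index
   shifts of the series.  Since theta vanishes on [1, p], the defect
   theta(x) - (x/(p-1) - log_p x) is invariant under x |-> p x, so the bound in (iii)
   reduces to [1, p], where it follows from the concavity of ln. *)

Lemma pow_unbounded (q M : R) : 1 < q -> exists N, M <= q ^ N.
Proof.
  intros Hq.
  destruct (Pow_x_infinity q ltac:(rewrite Rabs_pos_eq; lra) M) as [N HN].
  exists N. specialize (HN N (le_n N)).
  rewrite Rabs_pos_eq in HN by (apply pow_le; lra). lra.
Qed.

Lemma in_Hp_0 p : in_Hp p 0.
Proof. exists 0%Z, 0%nat. simpl. field. Qed.

Lemma in_Hp_add p s t : (1 <= p)%nat -> in_Hp p s -> in_Hp p t -> in_Hp p (s + t).
Proof.
  intros Hp [k1 [n1 ->]] [k2 [n2 ->]].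
  assert (P1 : 0 < INR p ^ n1) by (apply pow_lt, lt_0_INR; lia).
  assert (P2 : 0 < INR p ^ n2) by (apply pow_lt, lt_0_INR; lia).
  exists (k1 * Z.of_nat (p ^ n2) + k2 * Z.of_nat (p ^ n1))%Z, (n1 + n2)%nat.
  rewrite plus_IZR, !mult_IZR, <- !INR_IZR_INZ, !pow_INR, pow_add.
  field. lra.
Qed.

Lemma in_Hp_opp_pow p m : in_Hp p (- INR p ^ m).
Proof.
  exists (- Z.of_nat (p ^ m))%Z, 0%nat.
  rewrite opp_IZR, <- INR_IZR_INZ, pow_INR. simpl. field.
Qed.

Lemma in_Hp_inv_pow p m : (1 <= p)%nat -> in_Hp p (/ INR p ^ m).
Proof.
  intros Hp. exists 1%Z, m.
  assert (0 < INR p ^ m) by (apply pow_lt, lt_0_INR; lia).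
  simpl. field. lra.
Qed.

Definition hinge (ab : R * R) (x : R) : R := Rmax 0 (fst ab + snd ab * x).

Definition hinge_sum (l : list (R * R)) (x : R) : R :=
  fold_right (fun ab s => hinge ab x + s) 0 l.

Lemma hinge_sum_app l1 l2 x : hinge_sum (l1 ++ l2) x = hinge_sum l1 x + hinge_sum l2 x.
Proof. unfold hinge_sum; induction l1 as [|ab l1 IH]; simpl; [ring|rewrite IH; ring]. Qed.

Lemma hinge_continuous ab x : continuous (hinge ab) x.
Proof.
  set (u := fun y => fst ab + snd ab * y).
  assert (Hu : continuous u x).
  { apply (continuous_plus (fun _ => fst ab) (fun y => snd ab * y)).
    - apply continuous_const.
    - apply (continuous_mult (fun _ => snd ab) (fun y => y));
        [apply continuous_const|apply continuous_id]. }
  apply continuous_ext with (fun y => (u y + Rabs (u y)) / 2).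
  { intros y. unfold hinge, u, Rmax, Rabs.
    destruct (Rle_dec 0 _), (Rcase_abs _); lra. }
  apply (continuous_mult (fun y => u y + Rabs (u y)) (fun _ => / 2)).
  - apply (continuous_plus u (fun y => Rabs (u y))); [exact Hu|].
    apply continuous_Rabs_comp, Hu.
  - apply continuous_const.
Qed.

Lemma hinge_sum_continuous l x : continuity_pt (hinge_sum l) x.
Proof.
  apply continuity_pt_filterlim. change (continuous (hinge_sum l) x).
  induction l as [|ab l IH].
  - apply continuous_const.
  - apply (continuous_plus (hinge ab) (hinge_sum l)); [apply hinge_continuous|exact IH].
Qed.

Lemma hinge_sum_convex l x y t : 0 <= t <= 1 ->
  hinge_sum l (t * x + (1 - t) * y) <= t * hinge_sum l x + (1 - t) * hinge_sum l y.
Proof.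
  intros Ht. induction l as [|[a b] l IH]; cbn [hinge_sum fold_right]; [lra|].
  fold (hinge_sum l x) (hinge_sum l y) (hinge_sum l (t * x + (1 - t) * y)).
  assert (Hab : hinge (a, b) (t * x + (1 - t) * y)
                <= t * hinge (a, b) x + (1 - t) * hinge (a, b) y).
  { unfold hinge; simpl.
    pose proof (Rmax_l 0 (a + b * x)). pose proof (Rmax_r 0 (a + b * x)).
    pose proof (Rmax_l 0 (a + b * y)). pose proof (Rmax_r 0 (a + b * y)).
    apply Rmax_lub; nra. }
  lra.
Qed.

(* Unlike [pw_affine_Hp], all pieces must lie inside [a, b], so the property only
   depends on [f] restricted to [a, b] and intervals can be glued. *)
Definition pw_affine_on (p : nat) (f : R -> R) (a b : R) : Prop :=
  exists (xs : list R) (sl c : nat -> R),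
    (2 <= length xs)%nat /\ nth 0 xs 0 = a /\ last xs 0 = b /\
    (forall i, (S i < length xs)%nat ->
       a <= nth i xs 0 /\ nth (S i) xs 0 <= b /\ nth i xs 0 < nth (S i) xs 0 /\
       in_Hp p (sl i) /\
       forall x, nth i xs 0 <= x <= nth (S i) xs 0 -> f x = sl i * x + c i).

Lemma pw_affine_on_ext p f g a b :
  (forall x, a <= x <= b -> f x = g x) -> pw_affine_on p g a b -> pw_affine_on p f a b.
Proof.
  intros E [xs [sl [c [L [H0 [Hl P]]]]]]. exists xs, sl, c. do 3 (split; [assumption|]).
  intros i Hi. destruct (P i Hi) as [Ha [Hb [Hlt [Hs Hf]]]]. do 4 (split; [assumption|]).
  intros x Hx. rewrite E by lra. apply Hf, Hx.
Qed.

Lemma pw_affine_on_affine p f s d a b : a < b -> in_Hp p s ->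
  (forall x, a <= x <= b -> f x = s * x + d) -> pw_affine_on p f a b.
Proof.
  intros Hab Hs E. exists (a :: b :: nil), (fun _ => s), (fun _ => d).
  do 3 (split; [reflexivity || (simpl; lia)|]).
  intros [|i] Hi; [|simpl in Hi; lia]. simpl. repeat split; auto; lra.
Qed.

Lemma pw_affine_on_add_affine p f g s d a b : (1 <= p)%nat -> in_Hp p s ->
  (forall x, a <= x <= b -> g x = s * x + d) ->
  pw_affine_on p f a b -> pw_affine_on p (fun x => g x + f x) a b.
Proof.
  intros Hp Hs E [xs [sl [c [L [H0 [Hl P]]]]]].
  exists xs, (fun i => s + sl i), (fun i => d + c i). do 3 (split; [assumption|]).
  intros i Hi. destruct (P i Hi) as [Ha [Hb [Hlt [Hsl Hf]]]].
  do 3 (split; [assumption|]). split; [apply in_Hp_add; assumption|].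
  intros x Hx. rewrite E, Hf by lra. ring.
Qed.

Lemma last_app_cons {A : Type} (l : list A) b t d : last (l ++ b :: t) d = last (b :: t) d.
Proof. induction l as [|x [|y l] IH]; [reflexivity|reflexivity|exact IH]. Qed.

Lemma pw_affine_on_concat p f a b c :
  pw_affine_on p f a b -> pw_affine_on p f b c -> pw_affine_on p f a c.
Proof.
  intros [xs1 [sl1 [c1 [L1 [H1 [E1 P1]]]]]] [xs2 [sl2 [c2 [L2 [H2 [E2 P2]]]]]].
  assert (Hab : a <= b) by (destruct (P1 0%nat) as [? [? [? _]]]; [lia|lra]).
  assert (Hbc : b <= c) by (destruct (P2 0%nat) as [? [? [? _]]]; [lia|lra]).
  destruct (exists_last (l := xs1)) as [l1 [b1 ->]]; [intros ->; simpl in L1; lia|].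
  rewrite last_last in E1. subst b1. rewrite last_length in L1, P1.
  destruct xs2 as [|b2 t]; [simpl in L2; lia|]. simpl in H2. subst b2.
  set (n := length l1) in *.
  assert (N1 : forall j, (j <= n)%nat -> nth j (l1 ++ b :: t) 0 = nth j (l1 ++ b :: nil) 0).
  { intros j Hj. destruct (Nat.eq_dec j n) as [->|Hjn].
    - rewrite !app_nth2, Nat.sub_diag by lia. reflexivity.
    - rewrite !app_nth1 by lia. reflexivity. }
  assert (N2 : forall j, (n <= j)%nat -> nth j (l1 ++ b :: t) 0 = nth (j - n) (b :: t) 0)
    by (intros; apply app_nth2; lia).
  exists (l1 ++ b :: t),
    (fun i => if Nat.ltb i n then sl1 i else sl2 (i - n)%nat),
    (fun i => if Nat.ltb i n then c1 i else c2 (i - n)%nat).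
  rewrite length_app. simpl length in *.
  split; [lia|]. split; [rewrite N1 by lia; exact H1|]. split; [rewrite last_app_cons; exact E2|].
  intros i Hi. destruct (Nat.ltb_spec i n).
  - rewrite !N1 by lia. destruct (P1 i) as [? [? [? [? ?]]]]; [lia|]. repeat split; auto; lra.
  - rewrite !N2 by lia. replace (S i - n)%nat with (S (i - n)) by lia.
    destruct (P2 (i - n)%nat) as [? [? [? [? ?]]]]; [lia|]. repeat split; auto; lra.
Qed.

Definition hinge_sign_const (ab : R * R) (u v : R) : Prop :=
  (forall x, u <= x <= v -> 0 <= fst ab + snd ab * x) \/
  (forall x, u <= x <= v -> fst ab + snd ab * x <= 0).

Lemma hinge_sign_split ab a b : a < b ->
  hinge_sign_const ab a b \/
  exists k, a < k < b /\ hinge_sign_const ab a k /\ hinge_sign_const ab k b.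
Proof.
  intros Hab. destruct ab as [al be]. unfold hinge_sign_const; simpl.
  destruct (Req_dec be 0) as [->|Hbe].
  { left. destruct (Rle_dec 0 al); [left|right]; intros; lra. }
  set (k := - al / be).
  assert (E : forall x, al + be * x = be * (x - k)) by (intros; unfold k; field; lra).
  assert (Side : forall u v, k <= u \/ v <= k ->
    (forall x, u <= x <= v -> 0 <= be * (x - k)) \/
    (forall x, u <= x <= v -> be * (x - k) <= 0)).
  { intros u v Huv. destruct (Rle_dec 0 be), Huv; [left|right|right|left]; intros; nra. }
  setoid_rewrite E.
  destruct (Rle_dec k a); [left; apply Side; lra|].
  destruct (Rle_dec b k); [left; apply Side; lra|].
  right. exists k. split; [lra|split; apply Side; lra].
Qed.

Lemma pw_affine_on_hinge_cons p ab l u v : (1 <= p)%nat -> in_Hp p (snd ab) ->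
  hinge_sign_const ab u v -> pw_affine_on p (hinge_sum l) u v ->
  pw_affine_on p (hinge_sum (ab :: l)) u v.
Proof.
  intros Hp Hs [Hpos|Hneg] Hl;
    change (pw_affine_on p (fun x => hinge ab x + hinge_sum l x) u v).
  - apply pw_affine_on_add_affine with (snd ab) (fst ab); auto.
    intros x Hx. unfold hinge. rewrite Rmax_right by (apply Hpos; auto). ring.
  - apply pw_affine_on_add_affine with 0 0; auto using in_Hp_0.
    intros x Hx. unfold hinge. rewrite Rmax_left by (apply Hneg; auto). ring.
Qed.

Lemma pw_affine_on_hinge_sum p l a b : (1 <= p)%nat ->
  List.Forall (fun ab => in_Hp p (snd ab)) l -> a < b -> pw_affine_on p (hinge_sum l) a b.
Proof.
  intros Hp Hl. revert a b. induction Hl as [|ab l Hab Hl IH]; intros a b Hlt.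
  - apply pw_affine_on_affine with 0 0; auto using in_Hp_0.
    intros. unfold hinge_sum. simpl. ring.
  - destruct (hinge_sign_split ab a b Hlt) as [Hs|[k [Hk [Hs1 Hs2]]]].
    + apply pw_affine_on_hinge_cons; auto.
    + apply pw_affine_on_concat with k; apply pw_affine_on_hinge_cons; auto; apply IH; lra.
Qed.

Definition locally_hinge_sum (p : nat) (f : R -> R) : Prop :=
  forall a b, 0 < a -> exists l, List.Forall (fun ab => in_Hp p (snd ab)) l /\
    forall x, a <= x <= b -> f x = hinge_sum l x.

Lemma locally_hinge_sum_plus p f g : locally_hinge_sum p f -> locally_hinge_sum p g ->
  locally_hinge_sum p (fun x => f x + g x).
Proof.
  intros Hf Hg a b Ha.
  destruct (Hf a b Ha) as [lf [Hlf Ef]], (Hg a b Ha) as [lg [Hlg Eg]].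
  exists (lf ++ lg). split; [apply Forall_app; auto|].
  intros x Hx. rewrite hinge_sum_app, Ef, Eg by exact Hx. reflexivity.
Qed.

Lemma convex_pos_of_locally_hinge_sum p f : locally_hinge_sum p f -> convex_pos f.
Proof.
  intros Hf x y t Hx Hy Ht.
  destruct (Hf (Rmin x y) (Rmax x y) (Rmin_pos x y Hx Hy)) as [l [_ E]].
  pose proof (Rmin_l x y). pose proof (Rmin_r x y).
  pose proof (Rmax_l x y). pose proof (Rmax_r x y).
  rewrite !E; try lra; try nra. apply hinge_sum_convex, Ht.
Qed.

Lemma continuous_pos_of_locally_hinge_sum p f : locally_hinge_sum p f -> continuous_pos f.
Proof.
  intros Hf x Hx. destruct (Hf (x / 2) (2 * x)) as [l [_ E]]; [lra|].
  apply continuity_pt_locally_ext with (hinge_sum l) (x / 2); [lra| |apply hinge_sum_continuous].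
  intros y Hy. unfold Rdist in Hy. apply Rabs_def2 in Hy. symmetry. apply E. lra.
Qed.

Lemma pw_affine_Hp_of_locally_hinge_sum p f : (1 <= p)%nat ->
  locally_hinge_sum p f -> pw_affine_Hp p f.
Proof.
  intros Hp Hf a b Ha Hab. destruct (Hf a b Ha) as [l [Hl E]].
  destruct (pw_affine_on_ext p f (hinge_sum l) a b E (pw_affine_on_hinge_sum p l a b Hp Hl Hab))
    as [xs [sl [c [L [H0 [Hlast P]]]]]].
  exists xs, sl, c. do 3 (split; [assumption|]).
  intros i Hi. destruct (P i Hi) as [_ [_ Hpiece]]. exact Hpiece.
Qed.

Lemma is_series_eventually_zero (u : nat -> R) N :
  (forall m, (N < m)%nat -> u m = 0) -> is_series u (sum_n u N).
Proof.
  intros H. change (is_lim_seq (sum_n u) (sum_n u N)).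
  apply (is_lim_seq_ext_loc (fun _ => sum_n u N)); [|apply is_lim_seq_const].
  exists N. intros n Hn. induction Hn as [|n Hn IH]; [reflexivity|].
  rewrite sum_Sn, H, IH by lia. symmetry. apply Rplus_0_r.
Qed.

Lemma Series_pointwise_zero (u : nat -> R) : (forall m, u m = 0) -> Series u = 0.
Proof.
  intros Hu. rewrite (is_series_unique u (sum_n u 0)), sum_O; [apply Hu|].
  apply is_series_eventually_zero. intros m _. apply Hu.
Qed.

Lemma sum_n_hinge (ab : nat -> R * R) N x :
  sum_n (fun m => hinge (ab m) x) N = hinge_sum (map ab (seq 0 (S N))) x.
Proof.
  induction N as [|N IH].
  - rewrite sum_O. unfold hinge_sum. simpl. ring.
  - rewrite sum_Sn, IH, (seq_S (S N)), map_app, hinge_sum_app.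
    apply Rplus_eq_compat_l. unfold hinge_sum. simpl. ring.
Qed.

Lemma Series_hinge_eventually_zero (ab : nat -> R * R) N x :
  (forall m, (N < m)%nat -> hinge (ab m) x = 0) ->
  Series (fun m => hinge (ab m) x) = hinge_sum (map ab (seq 0 (S N))) x.
Proof.
  intros H. rewrite <- sum_n_hinge. apply is_series_unique, is_series_eventually_zero, H.
Qed.

Section Hinge_series.

Variable p : nat.
Hypothesis Hp : (2 <= p)%nat.

Lemma INR_p_ge_2 : 2 <= INR p.
Proof. replace 2 with (INR 2) by (simpl; ring). apply le_INR, Hp. Qed.

Definition fplus_hinge (m : nat) : R * R := (1, - INR p ^ m).
Definition fminus_hinge (k : nat) : R * R := (-1, / INR p ^ S k).

Lemma fplus_as_hinges lam : fplus p lam = Series (fun m => hinge (fplus_hinge m) lam).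
Proof. apply Series_ext. intros m. unfold hinge, fplus_hinge. simpl. f_equal. ring. Qed.

Lemma fminus_as_hinges lam : fminus p lam = Series (fun k => hinge (fminus_hinge k) lam).
Proof. apply Series_ext. intros k. unfold hinge, fminus_hinge. simpl. f_equal. ring. Qed.

Lemma fplus_hinge_vanish N m x : 0 < x -> 1 <= INR p ^ N * x -> (N <= m)%nat ->
  hinge (fplus_hinge m) x = 0.
Proof.
  intros Hx HN Hm. pose proof INR_p_ge_2.
  assert (INR p ^ N <= INR p ^ m) by (apply Rle_pow; lra || lia).
  unfold hinge, fplus_hinge. simpl. apply Rmax_left. nra.
Qed.

Lemma fminus_hinge_vanish N k x : 0 < x -> x <= INR p ^ N -> (N <= S k)%nat ->
  hinge (fminus_hinge k) x = 0.
Proof.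
  intros Hx HN Hk. pose proof INR_p_ge_2.
  assert (INR p ^ N <= INR p ^ S k) by (apply Rle_pow; lra || lia).
  assert (0 < INR p ^ S k) by (apply pow_lt; lra).
  unfold hinge, fminus_hinge. cbn [fst snd]. apply Rmax_left.
  enough (/ INR p ^ S k * x <= 1) by lra.
  rewrite <- (Rinv_l (INR p ^ S k)) by lra.
  apply Rmult_le_compat_l; [left; apply Rinv_0_lt_compat|]; lra.
Qed.

Lemma pow_brackets a b : 0 < a ->
  exists N, forall x, a <= x <= b -> 1 <= INR p ^ N * x /\ x <= INR p ^ N.
Proof.
  intros Ha. pose proof INR_p_ge_2.
  destruct (pow_unbounded (INR p) (Rmax (/ a) b)) as [N HN]; [lra|].
  pose proof (Rmax_l (/ a) b). pose proof (Rmax_r (/ a) b).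
  assert (/ a * a = 1) by (field; lra).
  exists N. intros x Hx. split; [nra|lra].
Qed.

Lemma fplus_locally_hinge_sum : locally_hinge_sum p (fplus p).
Proof.
  intros a b Ha. destruct (pow_brackets a b Ha) as [N HN].
  exists (map fplus_hinge (seq 0 (S N))). split.
  - apply Forall_map, Forall_forall. intros m _. apply in_Hp_opp_pow.
  - intros x Hx. destruct (HN x Hx). rewrite fplus_as_hinges.
    apply Series_hinge_eventually_zero. intros m Hm.
    apply fplus_hinge_vanish with N; lra || lia.
Qed.

Lemma fminus_locally_hinge_sum : locally_hinge_sum p (fminus p).
Proof.
  intros a b Ha. destruct (pow_brackets a b Ha) as [N HN].
  exists (map fminus_hinge (seq 0 (S N))). split.
  - apply Forall_map, Forall_forall. intros k _. apply in_Hp_inv_pow. lia.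
  - intros x Hx. destruct (HN x Hx). rewrite fminus_as_hinges.
    apply Series_hinge_eventually_zero. intros k Hk.
    apply fminus_hinge_vanish with N; lra || lia.
Qed.

Lemma theta_locally_hinge_sum : locally_hinge_sum p (theta p).
Proof. apply locally_hinge_sum_plus; [apply fplus_locally_hinge_sum|apply fminus_locally_hinge_sum]. Qed.

Lemma fplus_scale lam : 0 < lam -> fplus p (INR p * lam) - fplus p lam = - Rmax 0 (1 - lam).
Proof.
  intros Hl. destruct (pow_brackets lam lam Hl) as [N HN]. destruct (HN lam) as [HN1 _]; [lra|].
  rewrite !fplus_as_hinges, (Series_incr_1 (fun m => hinge (fplus_hinge m) lam)).
  2: { eexists. apply (is_series_eventually_zero _ N). intros m Hm.
       apply fplus_hinge_vanish with N; lra || lia. }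
  rewrite (Series_ext (fun m => hinge (fplus_hinge m) (INR p * lam))
                      (fun k => hinge (fplus_hinge (S k)) lam)).
  2: { intros m. unfold hinge, fplus_hinge. simpl. f_equal. ring. }
  unfold hinge at 2, fplus_hinge at 2. simpl.
  replace (1 + - (1) * lam) with (1 - lam) by ring. ring.
Qed.

Lemma fminus_scale lam : 0 < lam -> fminus p (INR p * lam) - fminus p lam = Rmax 0 (lam - 1).
Proof.
  intros Hl. pose proof INR_p_ge_2.
  destruct (pow_brackets (INR p * lam) (INR p * lam)) as [N HN]; [nra|].
  destruct (HN (INR p * lam)) as [_ HN1]; [lra|].
  rewrite !fminus_as_hinges, (Series_incr_1 (fun k => hinge (fminus_hinge k) (INR p * lam))).
  2: { eexists. apply (is_series_eventually_zero _ N). intros k Hk.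
       apply fminus_hinge_vanish with N; nra || lia. }
  rewrite (Series_ext (fun k => hinge (fminus_hinge (S k)) (INR p * lam))
                      (fun k => hinge (fminus_hinge k) lam)).
  2: { intros k. pose proof (pow_lt (INR p) k ltac:(lra)).
       unfold hinge, fminus_hinge. simpl. f_equal. field. lra. }
  unfold hinge at 1, fminus_hinge at 1. simpl.
  replace (-1 + / (INR p * 1) * (INR p * lam)) with (lam - 1) by (field; lra). ring.
Qed.

Lemma theta_scale lam : 0 < lam -> theta p (INR p * lam) = theta p lam + lam - 1.
Proof.
  intros Hl. unfold theta. pose proof (fplus_scale lam Hl). pose proof (fminus_scale lam Hl).
  unfold Rmax in *. destruct (Rle_dec 0 (1 - lam)), (Rle_dec 0 (lam - 1)); lra.
Qed.

Lemma theta_on_base lam : 1 <= lam <= INR p -> theta p lam = 0.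
Proof.
  intros Hl. unfold theta. rewrite fplus_as_hinges, fminus_as_hinges, !Series_pointwise_zero.
  - ring.
  - intros k. apply fminus_hinge_vanish with 1%nat; simpl; lra || lia.
  - intros m. apply fplus_hinge_vanish with 0%nat; simpl; lra || lia.
Qed.

End Hinge_series.

Lemma ln_le_sub_1 x : 0 < x -> ln x <= x - 1.
Proof. intros Hx. pose proof (exp_ineq1_le (ln x)). rewrite exp_ln in H by exact Hx. lra. Qed.

Lemma ln_chord_le P lam : 1 <= lam <= P -> (lam - 1) * ln P <= (P - 1) * ln lam.
Proof.
  intros Hl. set (w := / lam).
  assert (Hw : lam * w = 1) by (unfold w; field; lra).
  assert (Hw0 : 0 < w) by (unfold w; apply Rinv_0_lt_compat; lra).
  assert (T1 : - ln lam <= w - 1).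
  { replace (- ln lam) with (ln w) by (unfold w; rewrite ln_Rinv; lra).
    apply ln_le_sub_1, Hw0. }
  assert (T2 : ln P - ln lam <= P * w - 1).
  { replace (ln P - ln lam) with (ln (P * w))
      by (unfold w; rewrite ln_mult, ln_Rinv; [ring|lra|lra|apply Rinv_0_lt_compat; lra]).
    apply ln_le_sub_1, Rmult_lt_0_compat; lra. }
  (* weighting the two tangent bounds by [P - lam] and [lam - 1] cancels the right-hand sides *)
  assert (0 <= (P - lam) * (ln lam - (1 - w))) by (apply Rmult_le_pos; lra).
  assert (0 <= (lam - 1) * (P * w - 1 - (ln P - ln lam))) by (apply Rmult_le_pos; lra).
  assert (P * (lam * w) = P) by (rewrite Hw; ring).
  nra.
Qed.

Lemma bounded_of_scale_invariant (g : R -> R) (q M : R) : 1 < q ->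
  (forall x, 0 < x -> g (q * x) = g x) -> (forall x, 1 <= x <= q -> Rabs (g x) <= M) ->
  forall x, 0 < x -> Rabs (g x) <= M.
Proof.
  intros Hq Hinv Hbase.
  assert (Up : forall n x, 1 <= x <= q ^ n -> Rabs (g x) <= M).
  { induction n as [|n IH]; intros x Hx; simpl in Hx; [apply Hbase; lra|].
    destruct (Rle_dec x q) as [Hxq|Hxq]; [apply Hbase; lra|].
    replace x with (q * (x / q)) by (field; lra).
    rewrite Hinv by (apply Rdiv_lt_0_compat; lra).
    assert (x / q * q = x) by (field; lra).
    apply IH. split; nra. }
  assert (Down : forall n x, 0 < x -> 1 <= q ^ n * x -> Rabs (g x) <= M).
  { induction n as [|n IH]; intros x Hx Hn.
    - destruct (pow_unbounded q x Hq) as [N HN]. apply (Up N). simpl in Hn. lra.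
    - rewrite <- Hinv by exact Hx. apply IH; [nra|]. simpl in Hn. lra. }
  intros x Hx. destruct (pow_unbounded q (/ x) Hq) as [N HN].
  apply (Down N x Hx).
  assert (/ x * x = 1) by (field; lra). nra.
Qed.

Definition theta_log_defect (p : nat) (lam : R) : R :=
  theta p lam - (/ (INR p - 1) * lam - ln lam / ln (INR p)).

Lemma theta_log_defect_scale p lam : (2 <= p)%nat -> 0 < lam ->
  theta_log_defect p (INR p * lam) = theta_log_defect p lam.
Proof.
  intros Hp Hl. pose proof (INR_p_ge_2 p Hp).
  assert (0 < ln (INR p)) by (rewrite <- ln_1; apply ln_increasing; lra).
  unfold theta_log_defect. rewrite theta_scale, ln_mult by (auto; lra).
  field. lra.
Qed.

Lemma theta_log_defect_on_base p lam : (2 <= p)%nat -> 1 <= lam <= INR p ->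
  Rabs (theta_log_defect p lam) <= 1.
Proof.
  intros Hp Hl. pose proof (INR_p_ge_2 p Hp).
  unfold theta_log_defect. rewrite theta_on_base by auto.
  set (P := INR p) in *.
  assert (HlnP : 0 < ln P) by (rewrite <- ln_1; apply ln_increasing; lra).
  set (u := ln lam / ln P). set (v := / (P - 1) * lam).
  assert (Hu : u * ln P = ln lam) by (unfold u; field; lra).
  assert (Hv : v * (P - 1) = lam) by (unfold v; field; lra).
  assert (u0 : 0 <= u).
  { apply Rmult_le_reg_r with (ln P); [exact HlnP|].
    rewrite Hu, Rmult_0_l, <- ln_1. apply ln_le; lra. }
  assert (u1 : u <= 1).
  { apply Rmult_le_reg_r with (ln P); [exact HlnP|]. rewrite Hu, Rmult_1_l. apply ln_le; lra. }
  assert (Hchord : lam - 1 <= (P - 1) * u).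
  { apply Rmult_le_reg_r with (ln P); [exact HlnP|].
    rewrite Rmult_assoc, Hu. apply ln_chord_le, Hl. }
  apply Rabs_le. split; nra.
Qed.

Theorem lemma5p10 (p : nat) (hp : prime (Z.of_nat p)) :
  (* (i) *)
  (convex_pos (fplus p) /\ continuous_pos (fplus p) /\ pw_affine_Hp p (fplus p) /\
   convex_pos (fminus p) /\ continuous_pos (fminus p) /\ pw_affine_Hp p (fminus p) /\
   (forall lam, 0 < lam ->
      fplus p (INR p * lam) - fplus p lam = - Rmax 0 (1 - lam)) /\
   (forall lam, 0 < lam ->
      fminus p (INR p * lam) - fminus p lam = Rmax 0 (lam - 1))) /\
  (* (ii) *)
  (convex_pos (theta p) /\ continuous_pos (theta p) /\ pw_affine_Hp p (theta p) /\
   (forall lam, 0 < lam -> theta p (INR p * lam) = theta p lam + lam - 1)) /\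
  (* (iii) *)
  (forall lam, 0 < lam ->
     Rabs (theta p lam - (/ (INR p - 1) * lam - ln lam / ln (INR p))) <= 1).
Proof.
  assert (Hp : (2 <= p)%nat) by (pose proof (prime_ge_2 _ hp); lia).
  assert (Hp1 : (1 <= p)%nat) by lia.
  pose proof (fplus_locally_hinge_sum p Hp) as Hplus.
  pose proof (fminus_locally_hinge_sum p Hp) as Hminus.
  pose proof (theta_locally_hinge_sum p Hp) as Htheta.
  split; [|split].
  - repeat split; eauto using convex_pos_of_locally_hinge_sum,
      continuous_pos_of_locally_hinge_sum, pw_affine_Hp_of_locally_hinge_sum,
      fplus_scale, fminus_scale.
  - repeat split; eauto using convex_pos_of_locally_hinge_sum,
      continuous_pos_of_locally_hinge_sum, pw_affine_Hp_of_locally_hinge_sum, theta_scale.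
  - apply (bounded_of_scale_invariant (theta_log_defect p) (INR p)).
    + pose proof (INR_p_ge_2 p Hp). lra.
    + intros; apply theta_log_defect_scale; auto.
    + intros; apply theta_log_defect_on_base; auto.
Qed.
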